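(* Let $(\Delta,\mathcal H)$ be a generic cut with associated simplicial complexes $K_\Delta,K_+,K_-$ on $\widetilde{[m]}=[m]\cup\{o\}$. For $\sigma\subset\widetilde{[m]}$ let $F_\sigma=\bigcap_{i\in\sigma}H_i$, and let $Z=\{\sigma\subset\widetilde{[m]}: F_\sigma\neq\varnothing\text{ and }F_\sigma\subset\Delta_+\setminus H_o\}$. Then $$K_+\cap K_\Delta=\overline Z,\qquad (K_+\cup K_\Delta)\setminus K_-=Z.$$
   Context: Let $\Delta\subset\mathbb R^n$ be an $n$-dimensional simple polytope $\Delta=\{x:\langle x,\lambda_i\rangle+\eta_i\ge0,\ i=1,\dots,m\}$ whose facets $H_i=\Delta\cap\{\langle x,\lambda_i\rangle+\eta_i=0\}$ are all nonempty. A generic cut is a hyperplane $\mathcal H=\{\langle x,\lambda_0\rangle+\xi=0\}$ in general position with the hyperplanes $\{\langle x,\lambda_i\rangle+\eta_i=0\}$ and with $H_o:=\mathcal H\cap\Delta\neq\varnothing$ (so $H_o$ is the facet indexed by $o$). Set $\Delta_\pm=\Delta\cap\{\pm(\langle x,\lambda_0\rangle+\xi)\ge0\}$, $K_\Delta=\{\sigma\subset[m]:\bigcap_{i\in\sigma}H_i\ne\varnothing\}\cup\{\varnothing\}$, $K_\pm=\{\sigma\subset\widetilde{[m]}:\bigcap_{i\in\sigma}(H_i\cap\Delta_\pm)\ne\varnothing\}\cup\{\varnothing\}$. $\overline Z$ denotes the smallest simplicial complex containing $Z$ (all subsets of members of $Z$). *)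

From HB Require Import structures.
From mathcomp Require Import all_boot all_order all_algebra.
Set Implicit Arguments. Unset Strict Implicit. Unset Printing Implicit Defensive.
Import Order.TTheory GRing.Theory Num.Theory.
Local Open Scope ring_scope.

Section Cut.
Variables (R : realFieldType) (n m : nat).
Variables (lam : 'I_m -> 'rV[R]_n) (eta : 'I_m -> R).
Variables (lam0 : 'rV[R]_n) (xi : R).

Definition dotp (x y : 'rV[R]_n) : R := \sum_(k < n) x 0 k * y 0 k.

Definition ineq (i : 'I_m) (x : 'rV[R]_n) : R := dotp x (lam i) + eta i.
Definition cutf (x : 'rV[R]_n) : R := dotp x lam0 + xi.

Definition Delta (x : 'rV[R]_n) : Prop := forall i, 0 <= ineq i x.

Definition H (i : 'I_m) (x : 'rV[R]_n) : Prop := Delta x /\ ineq i x = 0.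

Definition bounded : Prop :=
  exists M : R, forall x, Delta x -> forall k, `|x 0 k| <= M.

Definition full_dim : Prop :=
  exists x : 'rV[R]_n, exists e : R, 0 < e /\
    forall y : 'rV[R]_n, (forall k, `|y 0 k - x 0 k| < e) -> Delta y.

Definition vertex (v : 'rV[R]_n) : Prop :=
  Delta v /\ forall y z, Delta y -> Delta z -> v = 2^-1 *: (y + z) -> y = z.

Definition simple : Prop :=
  forall v, vertex v -> #|[set i : 'I_m | ineq i v == 0]| = n.

Definition simple_polytope : Prop := bounded /\ full_dim /\ simple.

Definition facets_nonempty : Prop := forall i, exists x, H i x.

Definition cut_general_position : Prop :=
  forall x : 'rV[R]_n, cutf x = 0 ->
    ~ exists c : 'I_m -> R,
        lam0 = \sum_(i < m | ineq i x == 0) c i *: lam i.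

Definition Ho (x : 'rV[R]_n) : Prop := Delta x /\ cutf x = 0.

Definition generic_cut : Prop :=
  cut_general_position /\ exists x, Ho x.

Definition Delta_plus (x : 'rV[R]_n) : Prop := Delta x /\ 0 <= cutf x.
Definition Delta_minus (x : 'rV[R]_n) : Prop := Delta x /\ 0 <= - cutf x.

(* index set [m]~ = [m] u {o}, encoded as option 'I_m with None = o *)
Definition Ht (j : option 'I_m) (x : 'rV[R]_n) : Prop :=
  match j with Some i => H i x | None => Ho x end.

Definition F (s : {set option 'I_m}) (x : 'rV[R]_n) : Prop :=
  Delta x /\ forall j, j \in s -> Ht j x.

Definition K_Delta (s : {set option 'I_m}) : Prop :=
  s = set0 \/ (None \notin s /\ exists x, forall j, j \in s -> Ht j x).

Definition K_plus (s : {set option 'I_m}) : Prop :=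
  s = set0 \/ exists x, Delta_plus x /\ forall j, j \in s -> Ht j x.

Definition K_minus (s : {set option 'I_m}) : Prop :=
  s = set0 \/ exists x, Delta_minus x /\ forall j, j \in s -> Ht j x.

Definition Z (s : {set option 'I_m}) : Prop :=
  (exists x, F s x) /\ forall x, F s x -> Delta_plus x /\ ~ Ho x.

End Cut.

Definition closure_cx (T : finType) (Zs : {set T} -> Prop) (t : {set T}) : Prop :=
  exists s, Zs s /\ t \subset s.

(* The nontrivial inclusion is K_+ ∩ K_Δ ⊆ closure of Z.  Take x ∈ Δ_+ on
   the facets of s.  If x lies on the cut, general position gives a direction
   along the face of x that increases the cut function.  Then, as long as the
   smallest face of x contains a point y with cutf y <= 0, move along the ray
   from y through x: since Δ is bounded the ray leaves Δ through a new facet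
   at a point w with cutf w > cutf x, and the face of w is strictly smaller.
   The process ends at a point z whose whole face lies in {cutf > 0}; the
   facets through z form a simplex of Z containing s.  The other inclusions
   unfold the definitions. *)

From mathcomp Require Import all_boot all_order all_algebra lra.
From Stdlib Require Import Classical.
Import Order.TTheory GRing.Theory Num.Theory.
Local Open Scope ring_scope.

Set Implicit Arguments.
Unset Strict Implicit.
Unset Printing Implicit Defensive.

Section DotProduct.
Variables (R : realFieldType) (n : nat).
Implicit Types (x y d v : 'rV[R]_n) (t : R).

Lemma dotpDl x y v : dotp (x + y) v = dotp x v + dotp y v.
Proof. by rewrite /dotp -big_split; apply: eq_bigr => k _; rewrite mxE mulrDl. Qed.

Lemma dotpZl t x v : dotp (t *: x) v = t * dotp x v.
Proof. by rewrite /dotp mulr_sumr; apply: eq_bigr => k _; rewrite mxE mulrA. Qed.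

Lemma dotpBl x y v : dotp (x - y) v = dotp x v - dotp y v.
Proof. by rewrite -scaleN1r dotpDl dotpZl mulN1r. Qed.

Lemma dotp0l v : dotp 0 v = 0.
Proof. by rewrite -(scale0r 0) dotpZl mul0r. Qed.

Lemma span_of_orthogonal (m : nat) (a : 'I_m -> 'rV[R]_n) (P : pred 'I_m) v :
  (forall e, (forall i, P i -> dotp e (a i) = 0) -> dotp e v = 0) ->
  exists c : 'I_m -> R, v = \sum_(i < m | P i) c i *: a i.
Proof.
move=> orthoK.
set B := \matrix_(i < m) (if P i then a i else 0).
have /submxP [D vDB] : (v <= B)%MS.
  rewrite submxE; apply/eqP/matrixP => p j; rewrite ord1 !mxE.
  set e := \row_k cokermx B k j.
  have eB i : P i -> dotp e (a i) = 0.
    move=> Pi; have := congr1 (fun M : 'M_(m, n) => M i j) (mulmx_coker B).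
    rewrite !mxE => <-; apply: eq_bigr => k _; by rewrite !mxE Pi mulrC.
  apply: etrans (orthoK e eB); apply: eq_bigr => k _; by rewrite [e _ _]mxE mulrC.
exists (fun i => D 0 i); rewrite vDB mulmx_sum_row [RHS]big_mkcond /=.
by apply: eq_bigr => i _; rewrite rowK; case: (P i); rewrite ?scaler0.
Qed.

End DotProduct.

Section Cut.
Variables (R : realFieldType) (n m : nat).
Variables (lam : 'I_m -> 'rV[R]_n) (eta : 'I_m -> R) (lam0 : 'rV[R]_n) (xi : R).
Implicit Types (x y z w d : 'rV[R]_n) (t : R) (s : {set option 'I_m}).

Local Notation ineq := (ineq lam eta).
Local Notation Delta := (Delta lam eta).
Local Notation cutf := (cutf lam0 xi).
Local Notation Ht := (Ht lam eta lam0 xi).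
Local Notation F := (F lam eta lam0 xi).
Local Notation Z := (Z lam eta lam0 xi).
Local Notation Ho := (Ho lam eta lam0 xi).
Local Notation Delta_plus := (Delta_plus lam eta lam0 xi).
Local Notation Delta_minus := (Delta_minus lam eta lam0 xi).
Local Notation K_plus := (K_plus lam eta lam0 xi).
Local Notation K_minus := (K_minus lam eta lam0 xi).
Local Notation K_Delta := (K_Delta lam eta lam0 xi).

Hypothesis bounded_Delta : bounded lam eta.
Hypothesis general_position : cut_general_position lam eta lam0 xi.
Hypothesis cut_meets_Delta : exists x, Ho x.

Lemma ineqDZ i x d t : ineq i (x + t *: d) = ineq i x + t * dotp d (lam i).
Proof. by rewrite /ineq dotpDl dotpZl addrAC. Qed.

Lemma dotp_ineqB i x y : dotp (x - y) (lam i) = ineq i x - ineq i y.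
Proof. by rewrite /ineq dotpBl opprD addrACA subrr addr0. Qed.

(* The smallest face of [Delta] containing [z]. *)
Definition minface z y : Prop := Delta y /\ forall i, ineq i z = 0 -> ineq i y = 0.

Lemma minface_trans z w y : minface z w -> minface w y -> minface z y.
Proof. by move=> [_ zw] [Dy wy]; split=> // i /zw /wy. Qed.

Lemma Delta_ray z d t :
  Delta z -> (forall i, 0 <= dotp d (lam i)) -> 0 <= t -> Delta (z + t *: d).
Proof. by move=> Dz dge0 tge0 i; rewrite ineqDZ addr_ge0 ?mulr_ge0. Qed.

(* Moving from [z] along [d], the first facet hit is the one minimising
   [ineq i z / - dotp d (lam i)] among the [i] that [d] decreases. *)
Lemma ratio_test z d : Delta z ->
  (forall i, ineq i z = 0 -> dotp d (lam i) = 0) ->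
  (exists i, dotp d (lam i) < 0) ->
  exists2 t, 0 < t &
    Delta (z + t *: d) /\ exists i, ineq i z != 0 /\ ineq i (z + t *: d) = 0.
Proof.
move=> Dz zd [i dneg].
have slack_gt0 j : dotp d (lam j) < 0 -> 0 < ineq j z.
  move=> dj; rewrite lt_def Dz andbT; apply: contraTneq dj => /zd ->.
  by rewrite ltxx.
have [i0 di0 i0min] := arg_minP (fun j => ineq j z / - dotp d (lam j))
  (dneg : (fun j => dotp d (lam j) < 0) i).
set t := ineq i0 z / - dotp d (lam i0).
have tgt0 : 0 < t by rewrite divr_gt0 ?slack_gt0 ?oppr_gt0.
exists t => //; split.
  move=> j; rewrite ineqDZ; have [dj|dj] := ltP (dotp d (lam j)) 0.
    by move: (i0min j dj); rewrite ler_pdivlMr ?oppr_gt0 // mulrN -/t -subr_ge0 opprK.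
  by rewrite addr_ge0 ?Dz // mulr_ge0 // ltW.
exists i0; split; first by rewrite gt_eqF ?slack_gt0.
by rewrite ineqDZ /t invrN mulrN mulNr divfK ?subrr // lt_eqF.
Qed.

Lemma feasible_direction z d : Delta z ->
  (forall i, ineq i z = 0 -> dotp d (lam i) = 0) ->
  exists2 t, 0 < t & Delta (z + t *: d).
Proof.
move=> Dz zd; have [/existsP dneg|] := boolP [exists i, dotp d (lam i) < 0].
  by have [t tgt0 [Dt _]] := ratio_test Dz zd dneg; exists t.
rewrite negb_exists => /forallP dge0.
by exists 1; [exact: ltr01 | apply: Delta_ray => // i; rewrite leNgt dge0].
Qed.

Lemma bounded_ray_exit z d : d != 0 ->
  exists2 t, 0 <= t & ~ Delta (z + t *: d).
Proof.
have [M HM] := bounded_Delta; move=> /matrix0Pn [p [k dk]]; rewrite ord1 in dk.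
have dk_gt0 : 0 < `|d 0 k| by rewrite normr_gt0.
set t := (`|M| + `|z 0 k| + 1) / `|d 0 k|.
have tge0 : 0 <= t by rewrite divr_ge0 // !addr_ge0.
exists t => // Dt; have := HM _ Dt k; apply/negP; rewrite -ltNge.
have -> : (z + t *: d) 0 k = z 0 k + t * d 0 k by rewrite !mxE.
have := lerB_normD (t * d 0 k) (z 0 k).
rewrite normrM [`|t|]ger0_norm // /t divfK ?gt_eqF // [_ + z 0 k]addrC.
by have := ler_norm M; lra.
Qed.

Lemma cutfDZ x d t : cutf (x + t *: d) = cutf x + t * dotp d lam0.
Proof. by rewrite /cutf dotpDl dotpZl addrAC. Qed.

Lemma dotp_cutfB x y : dotp (x - y) lam0 = cutf x - cutf y.
Proof. by rewrite /cutf dotpBl opprD addrACA subrr addr0. Qed.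

(* Push [z] away from a point [y] of its face where [cutf] is smaller: by
   boundedness the ray leaves [Delta] through a new facet. *)
Lemma ray_step z y : Delta z -> minface z y -> cutf y < cutf z ->
  exists w, [/\ minface z w, cutf z < cutf w &
                exists i, ineq i z != 0 /\ ineq i w = 0].
Proof.
move=> Dz [Dy zy] yz; set d := z - y.
have zd i : ineq i z = 0 -> dotp d (lam i) = 0.
  by move=> zi; rewrite dotp_ineqB zi (zy i zi) subrr.
have d_gt0 : 0 < dotp d lam0 by rewrite dotp_cutfB subr_gt0.
have [/existsP dneg|] := boolP [exists i, dotp d (lam i) < 0].
  have [t t_gt0 [Dt [i [zi ti]]]] := ratio_test Dz zd dneg.
  exists (z + t *: d); split; last by exists i.
    by split=> // j zj; rewrite ineqDZ zj zd // mulr0 addr0.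
  by rewrite cutfDZ ltrDl mulr_gt0.
rewrite negb_exists => /forallP dge0.
have d_neq0 : d != 0 by apply: contraTneq d_gt0 => ->; rewrite dotp0l ltxx.
have [t t_ge0 []] := bounded_ray_exit z d_neq0.
by apply: Delta_ray => // i; rewrite leNgt dge0.
Qed.

Lemma ascend_to_positive_face x : Delta x -> 0 < cutf x ->
  exists z, [/\ minface x z, 0 < cutf z & forall y, minface z y -> 0 < cutf y].
Proof.
have [k] := ubnP #|[set i | ineq i x != 0]|; elim: k x => // k IH x.
rewrite ltnS => ltk Dx x_gt0.
have [[y [xy y_le0]] | nonpos] := classic (exists y, minface x y /\ cutf y <= 0).
  have [w [xw xw_lt [i [xi_neq0 wi_eq0]]]] := ray_step Dx xy (le_lt_trans y_le0 x_gt0).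
  have [Dw xw_act] := xw; have w_gt0 := lt_trans x_gt0 xw_lt.
  have shrink : [set i | ineq i w != 0] \proper [set i | ineq i x != 0].
    apply/properP; split; last by exists i; rewrite inE ?xi_neq0 ?wi_eq0 ?eqxx.
    by apply/subsetP => j; rewrite !inE; apply: contra => /eqP /xw_act ->.
  have [z [wz z_gt0 zpos]] := IH w (leq_trans (proper_card shrink) ltk) Dw w_gt0.
  by exists z; split=> //; exact: minface_trans xw wz.
exists x; split=> // y xy; rewrite ltNge; apply/negP => y_le0.
by apply: nonpos; exists y.
Qed.

Lemma leave_cut x : Delta x -> cutf x = 0 -> exists y, minface x y /\ 0 < cutf y.
Proof.
move=> Dx x0.
have [e [xe e_neq0]] : exists e,
    (forall i, ineq i x = 0 -> dotp e (lam i) = 0) /\ dotp e lam0 != 0.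
  have [//|no_e] := classic (exists e,
    (forall i, ineq i x = 0 -> dotp e (lam i) = 0) /\ dotp e lam0 != 0).
  case: (general_position x0); apply: span_of_orthogonal => e xe.
  have [//|e_neq0] := eqVneq (dotp e lam0) 0.
  by case: no_e; exists e; split=> // i /eqP /xe.
pose e' := dotp e lam0 *: e.
have xe' i : ineq i x = 0 -> dotp e' (lam i) = 0.
  by move/xe; rewrite dotpZl => ->; rewrite mulr0.
have [t t_gt0 Dt] := feasible_direction Dx xe'.
exists (x + t *: e'); split.
  by split=> // i xi0; rewrite ineqDZ xi0 xe' // mulr0 addr0.
by rewrite cutfDZ x0 add0r dotpZl mulr_gt0 // -expr2 exprn_even_gt0.
Qed.

Lemma Delta_plus_positive_face x : Delta_plus x ->
  exists z, [/\ minface x z, 0 < cutf z & forall y, minface z y -> 0 < cutf y].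
Proof.
move=> [Dx]; rewrite le_eqVlt => /orP [/eqP/esym x0 | x_gt0].
  have [y [xy y_gt0]] := leave_cut Dx x0.
  have [z [yz z_gt0 zpos]] := ascend_to_positive_face xy.1 y_gt0.
  by exists z; split=> //; exact: minface_trans xy yz.
exact: ascend_to_positive_face.
Qed.

Definition active z : {set option 'I_m} :=
  [set j | if j is Some i then ineq i z == 0 else false].

Lemma F_active z y : F (active z) y <-> minface z y.
Proof.
split=> -[Dy zy]; split=> //.
  by move=> i zi; have [] := zy (Some i); rewrite ?inE ?zi.
by case=> [i|]; rewrite inE // => /eqP /zy.
Qed.

Lemma Z_active z : Delta z -> (forall y, minface z y -> 0 < cutf y) -> Z (active z).
Proof.
move=> Dz zpos; split; first by exists z; apply/F_active.
move=> y /F_active zy; have y_gt0 := zpos y zy.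
split; first by split; [exact: zy.1 | exact: ltW].
by case=> _ y0; rewrite y0 ltxx in y_gt0.
Qed.

Lemma Ht_Delta j x : Ht j x -> Delta x.
Proof. by case: j => [i|] []. Qed.

Lemma K_plus_Delta_sub_closure s : K_plus s -> K_Delta s -> closure_cx Z s.
Proof.
move=> Kps Kds; have oNs : None \notin s by case: Kds => [->|[]//]; rewrite inE.
have [x [Dpx sx]] : exists x, Delta_plus x /\ forall j, j \in s -> Ht j x.
  case: Kps => [->|//]; have [x [Dx x0]] := cut_meets_Delta.
  by exists x; split=> [|j]; rewrite ?inE // /Delta_plus x0.
have [z [[Dz xz] _ zpos]] := Delta_plus_positive_face Dpx.
exists (active z); split; first exact: Z_active Dz zpos.
apply/subsetP => -[i si|oNs']; last by rewrite oNs' in oNs.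
by rewrite inE; apply/eqP/xz; case: (sx _ si).
Qed.

Lemma closure_sub_K_plus_Delta s : closure_cx Z s -> K_plus s /\ K_Delta s.
Proof.
move=> [t [[[x Ftx] Zt] st]].
have [[Dx x_ge0] x_notHo] := Zt x Ftx.
have sx j : j \in s -> Ht j x by move=> /(subsetP st) /Ftx.2.
split; right; first by exists x.
by split; [apply/negP => /sx /x_notHo | exists x].
Qed.

Lemma K_plus_Delta_minus_sub_Z s : K_plus s \/ K_Delta s -> ~ K_minus s -> Z s.
Proof.
move=> Kps not_Kms; have s_neq0 : s <> set0 by move=> s0; apply: not_Kms; left.
have [x sx] : exists x, forall j, j \in s -> Ht j x.
  by case: Kps => [[/s_neq0[]|[x [_ sx]]] | [/s_neq0[]|[_ [x sx]]]]; exists x.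
have /set0Pn [j0 sj0] : s != set0 by apply/eqP.
split; first by exists x; split=> //; exact: Ht_Delta (sx _ sj0).
move=> y [Dy sy]; have y_gt0 : 0 < cutf y.
  rewrite ltNge; apply/negP => y_le0; apply: not_Kms; right.
  by exists y; split=> //; split; rewrite ?oppr_ge0.
split; first by split; last exact: ltW.
by case=> _ y0; rewrite y0 ltxx in y_gt0.
Qed.

Lemma Z_sub_K_plus s : Z s -> K_plus s.
Proof.
move=> [[x [Dx sx]] Zs]; have [Dpx _] := Zs x (conj Dx sx).
by right; exists x.
Qed.

Lemma Z_not_K_minus s : Z s -> ~ K_minus s.
Proof.
move=> [_ Zs] [s0|[y [[Dy y_le0] sy]]].
  have [x [Dx x0]] := cut_meets_Delta.
  have Fx : F s x by split=> // j; rewrite s0 inE.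
  by case: (Zs x Fx) => _; apply; split.
have [[_ y_ge0] y_notHo] := Zs y (conj Dy sy).
by apply: y_notHo; split=> //; apply/eqP; rewrite eq_le y_ge0 -oppr_ge0 y_le0.
Qed.

End Cut.

Theorem lemma3p10 (R : realFieldType) (n m : nat)
    (lam : 'I_m -> 'rV[R]_n) (eta : 'I_m -> R) (lam0 : 'rV[R]_n) (xi : R) :
  simple_polytope lam eta ->
  facets_nonempty lam eta ->
  generic_cut lam eta lam0 xi ->
  (forall s : {set option 'I_m},
      (K_plus lam eta lam0 xi s /\ K_Delta lam eta lam0 xi s) <->
      closure_cx (Z lam eta lam0 xi) s) /\
  (forall s : {set option 'I_m},
      ((K_plus lam eta lam0 xi s \/ K_Delta lam eta lam0 xi s) /\
        ~ K_minus lam eta lam0 xi s) <->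
      Z lam eta lam0 xi s).
Proof.
move=> [bdd _] _ [gp cutD]; split=> s; split.
- by case; apply: (K_plus_Delta_sub_closure bdd gp cutD).
- exact: closure_sub_K_plus_Delta.
- by case; apply: K_plus_Delta_minus_sub_Z.
- by move=> Zs; split; [left; exact: Z_sub_K_plus | exact: (Z_not_K_minus cutD)].
Qed.
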